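(* Let $g$ be analytic, univalent and convex in $\mathbb{D}$ (i.e. $g$ maps $\mathbb{D}$ one-to-one onto a convex domain), and let $f(z)=\sum_{n=0}^\infty a_n z^n$ be analytic in $\mathbb{D}$ with $f\prec g$. Let $\lambda=\operatorname{dist}(g(0),\partial g(\mathbb{D}))$ and assume $\lambda\le 1$. For $0\le r<1$ define $$T_f(r)=\sum_{n=1}^\infty |a_n|r^n+\left(\frac{1}{2-\lambda}+\frac{r}{1-r}\right)\sum_{n=1}^\infty|a_n|^2r^{2n}.$$ Then $T_f(r)\le\lambda$ for all $0\le r\le r_*$, where $r_*\approx0.24683$ is the unique root of $3r^3-5r^2-3r+1=0$ in $(0,1)$. Moreover, for any $\lambda\in(0,1)$ there is a uniquely defined $r_0\in\left(r_*,\tfrac13\right)$, namely the solution in this interval of $$4r^3\lambda^2-(7r^3+3r^2-3r+1)\lambda+6r^3-2r^2-6r+2=0,$$ such that $T_f(r)\le\lambda$ for all $r\in[0,r_0]$.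
   Context: $\mathbb{D}$ is the open unit disk; $\operatorname{dist}(c,\partial\Omega)$ is the Euclidean distance from $c$ to the boundary of $\Omega$. $f\prec g$ means there is an analytic $\omega:\mathbb{D}\to\mathbb{D}$ with $\omega(0)=0$ and $f=g\circ\omega$. *)

From Stdlib Require Import Reals.
From Coquelicot Require Import Coquelicot.
Open Scope R_scope.

Definition inD (z : C) : Prop := Cmod z < 1.

(* holomorphic (complex differentiable) at every point of the unit disk;
   ex_derive on C -> C is the complex derivative (K = C_AbsRing) *)
Definition analytic_D (f : C -> C) : Prop :=
  forall z : C, inD z -> ex_derive f z.

Definition univalent_D (g : C -> C) : Prop :=
  forall z1 z2 : C, inD z1 -> inD z2 -> g z1 = g z2 -> z1 = z2.

Definition image_D (g : C -> C) (w : C) : Prop := exists z, inD z /\ g z = w.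

Definition convex_image_D (g : C -> C) : Prop :=
  forall w1 w2 : C, image_D g w1 -> image_D g w2 ->
  forall t : R, 0 <= t <= 1 ->
    image_D g (Cplus (Cmult (RtoC (1 - t)) w1) (Cmult (RtoC t) w2)).

Definition subordinate (f g : C -> C) : Prop :=
  exists omega : C -> C,
    analytic_D omega /\ (forall z, inD z -> inD (omega z)) /\
    omega (RtoC 0) = RtoC 0 /\
    (forall z, inD z -> f z = g (omega z)).

Definition boundary (Omega : C -> Prop) (w : C) : Prop :=
  (forall eps : R, 0 < eps -> exists u, Omega u /\ Cmod (Cminus u w) < eps) /\
  (forall eps : R, 0 < eps -> exists v, ~ Omega v /\ Cmod (Cminus v w) < eps).

(* dist(c, boundary Omega) as an extended real (+oo if the boundary is empty) *)
Definition dist_boundary (c : C) (Omega : C -> Prop) : Rbar :=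
  Glb_Rbar (fun d : R => exists w, boundary Omega w /\ d = Cmod (Cminus w c)).

Definition T_f (a : nat -> C) (lam r : R) : R :=
  Series (fun n => Cmod (a (S n)) * r ^ (S n))
  + (1 / (2 - lam) + r / (1 - r)) *
    Series (fun n => (Cmod (a (S n))) ^ 2 * r ^ (2 * S n)).

(* If f maps the unit disk into a convex set Omega, average f over the N-th
   roots of unity on the circle |z| = r against the nonnegative weights
   (1 + Re (u zeta^(k n))) / N.  These weights reproduce the moments of the
   kernel 1 + Re (u e^(i n t)) up to order N - n, so the averages, which are
   convex combinations of points of Omega, tend to a_0 + (conj u / 2) a_n r^n as
   N grows.  Letting the unimodular u vary and using convexity once more, Omega
   contains the open disk of radius |a_n| r^n / 2 about a_0; letting r -> 1
   gives |a_n| <= 2 dist(a_0, boundary Omega).  For f subordinate to g this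
   applies to Omega = g(D), of which only convexity is needed, so |a_n| <= 2 lam.
   Summing the resulting geometric majorant of T_f(r) leaves the gap
   lam P(r, lam) / ((2 - lam) (1 - r) (1 - r^2)), where P is the cubic of the
   statement; P(., lam) decreases on [0, 1/3], equals (1 - lam) times a positive
   number at r_*, and is negative at 1/3. *)

From Stdlib Require Import Reals Lra Lia Psatz.
From Coquelicot Require Import Coquelicot.
Open Scope R_scope.

(* [csum N F] and [rsum N F] sum over the indices k < N, whereas Coquelicot's
   [sum_n F M] sums over k <= M (see [sum_n_csum]). *)
Fixpoint csum (N : nat) (F : nat -> C) : C :=
  match N with O => RtoC 0 | S N' => (csum N' F + F N')%C end.

Fixpoint rsum (N : nat) (F : nat -> R) : R :=
  match N with O => 0 | S N' => rsum N' F + F N' end.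

Lemma csum_ext N F G :
  (forall k, (k < N)%nat -> F k = G k) -> csum N F = csum N G.
Proof.
  induction N as [|N IH]; intros H; simpl; [reflexivity|].
  rewrite IH, H; auto; intros; apply H; lia.
Qed.

Lemma rsum_ext N F G :
  (forall k, (k < N)%nat -> F k = G k) -> rsum N F = rsum N G.
Proof.
  induction N as [|N IH]; intros H; simpl; [reflexivity|].
  rewrite IH, H; auto; intros; apply H; lia.
Qed.

Lemma csum_plus N F G :
  csum N (fun k => F k + G k)%C = (csum N F + csum N G)%C.
Proof. induction N as [|N IH]; simpl; [|rewrite IH]; ring. Qed.

Lemma csum_minus N F G :
  csum N (fun k => F k - G k)%C = (csum N F - csum N G)%C.
Proof. induction N as [|N IH]; simpl; [|rewrite IH]; ring. Qed.

Lemma csum_mult_l N c F :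
  csum N (fun k => c * F k)%C = (c * csum N F)%C.
Proof. induction N as [|N IH]; simpl; [|rewrite IH]; ring. Qed.

Lemma csum_const N c : csum N (fun _ => c) = (INR N * c)%C.
Proof.
  induction N as [|N IH]; cbn [csum]; [simpl; ring|].
  rewrite IH, S_INR, RtoC_plus. ring.
Qed.

Lemma csum_RtoC N w : csum N (fun k => RtoC (w k)) = RtoC (rsum N w).
Proof. induction N as [|N IH]; simpl; [|rewrite IH, RtoC_plus]; reflexivity. Qed.

Lemma csum_conj N F : csum N (fun k => Cconj (F k)) = Cconj (csum N F).
Proof.
  induction N as [|N IH]; simpl.
  - apply injective_projections; simpl; ring.
  - rewrite IH, Cplus_conj. reflexivity.
Qed.

Lemma csum_swap N M (F : nat -> nat -> C) :
  csum N (fun k => csum M (F k)) = csum M (fun m => csum N (fun k => F k m)).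
Proof.
  induction N as [|N IH]; simpl.
  - symmetry. induction M as [|M IHM]; simpl; [|rewrite IHM]; ring.
  - rewrite IH, <- csum_plus. reflexivity.
Qed.

Lemma csum_kronecker M j (F : nat -> C) : (j < M)%nat ->
  csum M (fun m => if Nat.eqb m j then F m else 0)%C = F j.
Proof.
  induction M as [|M IH]; intros Hj; [lia|]; simpl.
  destruct (Nat.eqb_spec M j) as [->|HMj].
  - rewrite (csum_ext _ _ (fun _ => RtoC 0)), csum_const; [ring|].
    intros k Hk. destruct (Nat.eqb_spec k j); [lia|reflexivity].
  - rewrite IH by lia. ring.
Qed.

Lemma Cmod_csum_le N F : Cmod (csum N F) <= rsum N (fun k => Cmod (F k)).
Proof.
  induction N as [|N IH]; simpl.
  - rewrite Cmod_0. lra.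
  - eapply Rle_trans; [apply Cmod_triangle|]. lra.
Qed.

Lemma rsum_le N F G :
  (forall k, (k < N)%nat -> F k <= G k) -> rsum N F <= rsum N G.
Proof.
  induction N as [|N IH]; intros H; simpl; [lra|].
  apply Rplus_le_compat; [apply IH; intros k Hk|]; apply H; lia.
Qed.

Lemma rsum_mult_l N c F : rsum N (fun k => c * F k) = c * rsum N F.
Proof. induction N as [|N IH]; simpl; [|rewrite IH]; ring. Qed.

Lemma rsum_nonneg N F :
  (forall k, (k < N)%nat -> 0 <= F k) -> 0 <= rsum N F.
Proof.
  induction N as [|N IH]; intros H; simpl; [lra|].
  apply Rplus_le_le_0_compat; [apply IH; intros k Hk|]; apply H; lia.
Qed.

Lemma rsum_eq0_nonneg N F :
  (forall k, (k < N)%nat -> 0 <= F k) -> rsum N F = 0 ->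
  forall k, (k < N)%nat -> F k = 0.
Proof.
  induction N as [|N IH]; simpl; intros H H0 k Hk; [lia|].
  assert (0 <= rsum N F) by (apply rsum_nonneg; intros; apply H; lia).
  assert (0 <= F N) by (apply H; lia).
  destruct (Nat.eq_dec k N) as [->|]; [lra|].
  apply IH; [intros; apply H; lia | lra | lia].
Qed.

Lemma sum_n_csum (F : nat -> C) M : sum_n F M = csum (S M) F.
Proof.
  induction M as [|M IH].
  - rewrite sum_O. simpl. ring.
  - rewrite sum_Sn, IH. reflexivity.
Qed.

Definition convex_set (Omega : C -> Prop) : Prop :=
  forall w1 w2 : C, Omega w1 -> Omega w2 -> forall t : R, 0 <= t <= 1 ->
    Omega (RtoC (1 - t) * w1 + t * w2)%C.

Lemma convex_csum (Omega : C -> Prop) : convex_set Omega ->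
  forall N (w : nat -> R) (P : nat -> C),
  (forall k, (k < N)%nat -> 0 <= w k) -> rsum N w = 1 ->
  (forall k, (k < N)%nat -> Omega (P k)) ->
  Omega (csum N (fun k => w k * P k)%C).
Proof.
  intros Hconv N. induction N as [|N IH]; intros w P Hw Hsum HP; simpl in *; [lra|].
  assert (HwN : 0 <= w N) by (apply Hw; lia).
  assert (HW : 0 <= rsum N w) by (apply rsum_nonneg; intros; apply Hw; lia).
  destruct (Req_dec (rsum N w) 0) as [HW0|HW0].
  - assert (Hz : forall k, (k < N)%nat -> w k = 0)
      by (apply rsum_eq0_nonneg; auto; intros; apply Hw; lia).
    rewrite (csum_ext _ _ (fun _ => RtoC 0)), csum_const
      by (intros k Hk; rewrite Hz by exact Hk; ring).
    replace (w N) with 1 by lra.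
    replace (INR N * 0 + 1 * P N)%C with (P N) by ring. apply HP; lia.
  - set (W := rsum N w) in *.
    assert (HI : Omega (csum N (fun k => RtoC (w k / W) * P k)%C)).
    { apply IH.
      - intros k Hk. apply Rdiv_le_0_compat; [apply Hw; lia | lra].
      - unfold Rdiv. rewrite (rsum_ext _ _ (fun k => / W * w k)) by (intros; ring).
        rewrite rsum_mult_l. fold W. field. exact HW0.
      - intros; apply HP; lia. }
    replace (csum N (fun k => w k * P k)%C)
      with (RtoC (1 - w N) * csum N (fun k => RtoC (w k / W) * P k))%C.
    + apply Hconv; [exact HI | apply HP; lia | lra].
    + rewrite <- csum_mult_l. apply csum_ext. intros k _.
      replace (1 - w N) with W by lra.
      rewrite Cmult_assoc, <- RtoC_mult. f_equal. f_equal. field. exact HW0.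
Qed.

Definition zeta (N : nat) : C := (cos (2 * PI / INR N), sin (2 * PI / INR N)).

Lemma zeta_pow N j :
  (zeta N ^ j)%C = (cos (2 * PI / INR N * INR j), sin (2 * PI / INR N * INR j)).
Proof.
  induction j as [|j IH].
  - simpl. rewrite Rmult_0_r, cos_0, sin_0. reflexivity.
  - rewrite Cpow_S, IH, S_INR, Rmult_plus_distr_l, Rmult_1_r, cos_plus, sin_plus.
    apply injective_projections; simpl; ring.
Qed.

Lemma Cmod_zeta_pow N j : Cmod (zeta N ^ j) = 1.
Proof.
  rewrite zeta_pow. unfold Cmod. cbn [fst snd]. rewrite <- sqrt_1. f_equal.
  pose proof (sin2_cos2 (2 * PI / INR N * INR j)) as H. unfold Rsqr in H. nra.
Qed.

Lemma zeta_pow_N N : (0 < N)%nat -> (zeta N ^ N)%C = 1.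
Proof.
  intros HN. rewrite zeta_pow.
  replace (2 * PI / INR N * INR N) with (2 * PI) by (field; apply not_0_INR; lia).
  rewrite cos_2PI, sin_2PI. reflexivity.
Qed.

Lemma zeta_pow_neq1 N j : (0 < j < N)%nat -> (zeta N ^ j)%C <> 1.
Proof.
  intros Hj E. rewrite zeta_pow in E. injection E as Ecos Esin.
  set (x := 2 * PI / INR N * INR j) in *.
  assert (Hx : 0 < x < 2 * PI).
  { assert (HjN : 0 < INR j / INR N < 1).
    { assert (0 < INR j < INR N) by (split; [apply lt_0_INR | apply lt_INR]; lia).
      split; [apply Rdiv_lt_0_compat; lra|].
      apply Rmult_lt_reg_r with (INR N); [lra|].
      unfold Rdiv. rewrite Rmult_assoc, Rinv_l; lra. }
    replace x with (2 * PI * (INR j / INR N))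
      by (unfold x; field; apply not_0_INR; lia).
    pose proof PI_RGT_0. split; nra. }
  apply sin_eq_0_0 in Esin as [k Hk].
  pose proof PI_RGT_0.
  assert (Hk12 : (0 < k < 2)%Z) by (split; apply lt_IZR; simpl; nra).
  replace k with 1%Z in Hk by lia.
  rewrite Hk, Rmult_1_l, cos_PI in Ecos. lra.
Qed.

Lemma geom_csum (x : C) N :
  ((x - 1) * csum N (fun k => x ^ k))%C = (x ^ N - 1)%C.
Proof.
  induction N as [|N IH]; simpl; [ring|].
  rewrite Cmult_plus_distr_l, IH. ring.
Qed.

Lemma power_sum_zeta N j : (j < N)%nat ->
  csum N (fun k => (zeta N ^ k) ^ j)%C = if Nat.eqb j 0 then RtoC (INR N) else 0.
Proof.
  intros HjN. destruct (Nat.eqb_spec j 0) as [->|Hj0].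
  - rewrite (csum_ext _ _ (fun _ => 1%C)), csum_const by reflexivity. ring.
  - set (x := (zeta N ^ j)%C).
    rewrite (csum_ext _ _ (fun k => x ^ k)%C)
      by (intros; unfold x; rewrite <- !Cpow_mult_r, Nat.mul_comm; reflexivity).
    assert (Hx1 : (x - 1)%C <> 0) by (intro E; apply (zeta_pow_neq1 N j); [lia|];
      apply Ceq_minus; exact E).
    assert (HxN : (x ^ N)%C = 1)
      by (unfold x; rewrite <- Cpow_mult_r, Nat.mul_comm, Cpow_mult_r, zeta_pow_N
            by lia; apply Cpow_1_l).
    pose proof (geom_csum x N) as G. rewrite HxN in G.
    rewrite <- (Cmult_1_l (csum _ _)), <- (Cinv_l _ Hx1), <- Cmult_assoc, G. ring.
Qed.

Lemma conj_mult_unimodular y : Cmod y = 1 -> (Cconj y * y)%C = 1.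
Proof.
  intros H. rewrite Cmult_comm, <- Cmod2_conj, H. apply injective_projections; simpl; ring.
Qed.

Lemma cross_sum_zeta N n m : (n < N)%nat -> (m < N)%nat ->
  csum N (fun k => Cconj (zeta N ^ k) ^ n * (zeta N ^ k) ^ m)%C
  = if Nat.eqb m n then RtoC (INR N) else 0.
Proof.
  intros Hn Hm.
  assert (Hunit : forall k, (Cconj (zeta N ^ k) * zeta N ^ k)%C = 1)
    by (intros; apply conj_mult_unimodular, Cmod_zeta_pow).
  destruct (Nat.le_gt_cases n m) as [Hnm|Hmn].
  - replace m with (n + (m - n))%nat by lia.
    rewrite (csum_ext _ _ (fun k => (zeta N ^ k) ^ (m - n))%C).
    + rewrite power_sum_zeta by lia.
      destruct (Nat.eqb_spec (m - n) 0), (Nat.eqb_spec (n + (m - n)) n); auto; lia.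
    + intros k _. rewrite Cpow_add_r, Cmult_assoc, <- Cpow_mult_l, Hunit, Cpow_1_l. ring.
  - replace n with (m + (n - m))%nat by lia.
    rewrite (csum_ext _ _ (fun k => Cconj ((zeta N ^ k) ^ (n - m)))%C).
    + rewrite csum_conj, power_sum_zeta by lia.
      destruct (Nat.eqb_spec (n - m) 0), (Nat.eqb_spec m (m + (n - m))); try lia.
      apply injective_projections; simpl; ring.
    + intros k _.
      set (y := (zeta N ^ k)%C). specialize (Hunit k). fold y in Hunit.
      rewrite Cpow_add_r, Cpow_conj.
      replace (Cconj y ^ m * Cconj y ^ (n - m) * y ^ m)%C
        with ((Cconj y * y) ^ m * Cconj y ^ (n - m))%C
        by (rewrite Cpow_mult_l; ring).
      rewrite Hunit, Cpow_1_l. ring.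
Qed.

Definition weight (N n : nat) (u : C) (k : nat) : R :=
  (1 + Re (u * (zeta N ^ k) ^ n)) / INR N.

Definition moment (N n : nat) (u : C) (m : nat) : C :=
  csum N (fun k => weight N n u k * (zeta N ^ k) ^ m)%C.

Definition kernel_moment (n : nat) (u : C) (m : nat) : C :=
  ((if Nat.eqb m 0 then 1 else 0) + (if Nat.eqb m n then Cconj u / 2 else 0))%C.

Lemma moment_expand N n u m : (0 < N)%nat ->
  moment N n u m =
  (/ INR N * (csum N (fun k => (zeta N ^ k) ^ m)
     + u / 2 * csum N (fun k => (zeta N ^ k) ^ (n + m))
     + Cconj u / 2 * csum N (fun k => Cconj (zeta N ^ k) ^ n * (zeta N ^ k) ^ m)))%C.
Proof.
  intros HN. unfold moment.
  rewrite <- !csum_mult_l, <- !csum_plus, <- csum_mult_l. apply csum_ext. intros k _.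
  assert (HNC : RtoC (INR N) <> 0) by (intro E; injection E; apply not_0_INR; lia).
  unfold weight. rewrite RtoC_div, RtoC_plus, re_alt, Cmult_conj, Cpow_conj, Cpow_add_r
    by (apply not_0_INR; lia).
  field. exact HNC.
Qed.

Lemma moment_low N n u m : (0 < n)%nat -> (m + n < N)%nat ->
  moment N n u m = kernel_moment n u m.
Proof.
  intros Hn HmN. unfold kernel_moment.
  assert (HNC : RtoC (INR N) <> 0) by (intro E; injection E; apply not_0_INR; lia).
  rewrite moment_expand, !power_sum_zeta, cross_sum_zeta by lia.
  destruct (Nat.eqb_spec m 0), (Nat.eqb_spec (n + m) 0), (Nat.eqb_spec m n);
    try lia; field; exact HNC.
Qed.

Lemma weight_nonneg N n u k : (0 < N)%nat -> Cmod u = 1 -> 0 <= weight N n u k.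
Proof.
  intros HN Hu. unfold weight. apply Rdiv_le_0_compat; [|apply lt_0_INR; lia].
  pose proof (re_le_Cmod (u * (zeta N ^ k) ^ n)) as H.
  rewrite Cmod_mult, Cmod_pow, Cmod_zeta_pow, Hu, pow1 in H.
  apply Rabs_le_between in H. lra.
Qed.

Lemma weight_sum N n u : (0 < n < N)%nat -> rsum N (weight N n u) = 1.
Proof.
  intros Hn. pose proof (moment_low N n u 0 ltac:(lia) ltac:(lia)) as E.
  unfold moment, kernel_moment in E.
  rewrite (csum_ext _ _ (fun k => RtoC (weight N n u k))), csum_RtoC in E
    by (intros; simpl; ring).
  destruct (Nat.eqb_spec 0 0), (Nat.eqb_spec 0 n); try lia.
  apply (f_equal Re) in E. simpl in E. lra.
Qed.

Lemma Cmod_moment_le N n u m : (0 < n < N)%nat -> Cmod u = 1 -> Cmod (moment N n u m) <= 1.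
Proof.
  intros Hn Hu. unfold moment. eapply Rle_trans; [apply Cmod_csum_le|].
  rewrite <- (weight_sum N n u Hn). apply Req_le, rsum_ext. intros k _.
  rewrite Cmod_mult, Cmod_pow, Cmod_zeta_pow, pow1, Cmod_R, Rabs_pos_eq
    by (apply weight_nonneg; auto; lia).
  ring.
Qed.

Lemma Cmod_moment_defect_le N n u m : (0 < n)%nat -> (2 * n < N)%nat -> Cmod u = 1 ->
  Cmod (moment N n u m - kernel_moment n u m) <= if Nat.leb (N - n) m then 1 else 0.
Proof.
  intros Hn HN Hu. destruct (Nat.leb_spec (N - n) m).
  - unfold kernel_moment. destruct (Nat.eqb_spec m 0), (Nat.eqb_spec m n); try lia.
    replace (moment N n u m - (0 + 0))%C with (moment N n u m) by ring.
    apply Cmod_moment_le; auto; lia.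
  - rewrite moment_low by lia. replace (_ - _)%C with (RtoC 0) by ring.
    rewrite Cmod_0. lra.
Qed.

Lemma csum_weighted_partial_sums N M (w : nat -> R) (y a : nat -> C) (r : R) :
  csum N (fun k => w k * sum_n (fun m => (r * y k) ^ m * a m)%C M)%C
  = csum (S M) (fun m => a m * r ^ m * csum N (fun k => w k * y k ^ m))%C.
Proof.
  rewrite (csum_ext N _ (fun k => csum (S M) (fun m => a m * r ^ m * (w k * y k ^ m))%C)).
  - rewrite csum_swap. apply csum_ext. intros m _. apply csum_mult_l.
  - intros k _. rewrite sum_n_csum, <- csum_mult_l. apply csum_ext. intros m _.
    rewrite Cpow_mult_l. ring.
Qed.

Lemma geom_tail_le q L M : 0 <= q < 1 ->
  rsum M (fun m => if Nat.leb L m then q ^ m else 0) <= q ^ L / (1 - q).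
Proof.
  intros Hq.
  assert (E : rsum M (fun m => if Nat.leb L m then q ^ m else 0)
              = if Nat.leb L M then (q ^ L - q ^ M) / (1 - q) else 0).
  { induction M as [|M IH]; simpl.
    - destruct L; simpl; [field; lra | reflexivity].
    - rewrite IH.
      destruct (Nat.leb_spec L M), (Nat.leb_spec L (S M)); try lia.
      + simpl. field. lra.
      + replace L with (S M) by lia. simpl. field. lra.
      + ring. }
  rewrite E. pose proof (pow_le q L ltac:(lra)). pose proof (pow_le q M ltac:(lra)).
  destruct (Nat.leb L M); [|apply Rdiv_le_0_compat; lra].
  apply Rmult_le_compat_r; [apply Rlt_le, Rinv_0_lt_compat; lra | lra].
Qed.

Lemma Cmod_moment_series_defect_le N n u (a : nat -> C) r K q M :
  (0 < n)%nat -> (2 * n < N)%nat -> (n < M)%nat -> Cmod u = 1 ->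
  0 <= r -> 0 <= K -> 0 <= q < 1 -> (forall m, Cmod (a m) * r ^ m <= K * q ^ m) ->
  Cmod (csum M (fun m => a m * r ^ m * moment N n u m)
        - (a 0%nat + Cconj u / 2 * a n * r ^ n))%C
  <= K * (q ^ (N - n) / (1 - q)).
Proof.
  intros Hn HN HM Hu Hr HK Hq Hb.
  assert (Hkernel : csum M (fun m => a m * r ^ m * kernel_moment n u m)%C
                    = (a 0%nat + Cconj u / 2 * a n * r ^ n)%C).
  { unfold kernel_moment.
    rewrite (csum_ext _ _ (fun m =>
      (if Nat.eqb m 0 then a m * r ^ m else 0)
      + (if Nat.eqb m n then Cconj u / 2 * (a m * r ^ m) else 0))%C)
      by (intros m _; destruct (Nat.eqb m 0), (Nat.eqb m n); ring).
    rewrite csum_plus, !csum_kronecker by lia. simpl. ring. }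
  rewrite <- Hkernel, <- csum_minus.
  eapply Rle_trans; [apply Cmod_csum_le|].
  eapply Rle_trans;
    [apply rsum_le with (G := fun m => K * (if Nat.leb (N - n) m then q ^ m else 0))|].
  - intros m _.
    replace (a m * r ^ m * moment N n u m - a m * r ^ m * kernel_moment n u m)%C
      with (a m * r ^ m * (moment N n u m - kernel_moment n u m))%C by ring.
    rewrite !Cmod_mult, Cmod_pow, Cmod_R, Rabs_pos_eq by exact Hr.
    pose proof (Cmod_moment_defect_le N n u m Hn HN Hu) as Hd.
    pose proof (Cmod_ge_0 (moment N n u m - kernel_moment n u m)).
    pose proof (Hb m). pose proof (Rmult_le_pos _ _ (Cmod_ge_0 (a m)) (pow_le r m Hr)).
    destruct (Nat.leb (N - n) m); nra.
  - rewrite rsum_mult_l. apply Rmult_le_compat_l; [exact HK|]. apply geom_tail_le, Hq.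
Qed.

Lemma is_pseries_eventually_close (a : nat -> C) z l eps :
  is_pseries a z l -> 0 < eps ->
  eventually (fun M => Cmod (sum_n (fun m => z ^ m * a m)%C M - l) < eps).
Proof.
  intros Hs Heps.
  pose proof (norm_factor_gt_0 (K := C_AbsRing) (V := C_NormedModule)) as Hnf.
  assert (He : 0 < eps / norm_factor (K := C_AbsRing) (V := C_NormedModule))
    by (apply Rdiv_lt_0_compat; lra).
  eapply filter_imp; [|exact (proj1 (filterlim_locally _ l) Hs (mkposreal _ He))].
  intros M HM. apply (norm_compat2 (K := C_AbsRing)) in HM. simpl in HM.
  replace (norm_factor * (eps / norm_factor)) with eps in HM by (field; lra).
  exact HM.
Qed.

Lemma eventually_forall_lt N (P : nat -> nat -> Prop) :
  (forall k, (k < N)%nat -> eventually (P k)) ->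
  eventually (fun M => forall k, (k < N)%nat -> P k M).
Proof.
  induction N as [|N IH]; intros H.
  - exists 0%nat. intros; lia.
  - eapply filter_imp;
      [|apply filter_and; [apply IH; intros k Hk; apply H; lia | apply (H N); lia]].
    intros M [H1 H2] k Hk.
    destruct (Nat.eq_dec k N) as [->|]; [exact H2 | apply H1; lia].
Qed.

Lemma weighted_average_approx (a : nat -> C) (f : C -> C) r K q n N u :
  (forall z, inD z -> is_pseries a z (f z)) -> 0 < r < 1 ->
  0 <= K -> 0 <= q < 1 -> (forall m, Cmod (a m) * r ^ m <= K * q ^ m) ->
  (0 < n)%nat -> (2 * n < N)%nat -> Cmod u = 1 ->
  Cmod (csum N (fun k => weight N n u k * f (r * zeta N ^ k))
        - (a 0%nat + Cconj u / 2 * a n * r ^ n))%C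
  <= K * (q ^ (N - n) / (1 - q)).
Proof.
  intros Hf Hr HK Hq Hb Hn HN Hu.
  set (partial := fun k M => sum_n (fun m => (r * zeta N ^ k) ^ m * a m)%C M).
  apply Rle_plus_epsilon. intros eta Heta.
  assert (Hclose : eventually (fun M => (n < M)%nat /\ forall k, (k < N)%nat ->
            Cmod (partial k M - f (r * zeta N ^ k)) < eta)%C).
  { apply filter_and; [exists (S n); intros; lia|].
    apply eventually_forall_lt. intros k _.
    apply is_pseries_eventually_close; [|exact Heta]. apply Hf.
    unfold inD. rewrite Cmod_mult, Cmod_zeta_pow, Cmod_R, Rabs_pos_eq; lra. }
  destruct Hclose as [M HM]. destruct (HM M (le_n _)) as [HnM Hclose].
  set (L := (a 0%nat + Cconj u / 2 * a n * r ^ n)%C).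
  assert (Hpartial : csum N (fun k => weight N n u k * partial k M)%C
                     = csum (S M) (fun m => a m * r ^ m * moment N n u m)%C)
    by apply csum_weighted_partial_sums.
  assert (Hsplit :
    (csum N (fun k => weight N n u k * f (r * zeta N ^ k)) - L
     = csum N (fun k => weight N n u k * (f (r * zeta N ^ k) - partial k M))
       + (csum (S M) (fun m => a m * r ^ m * moment N n u m) - L))%C).
  { rewrite <- Hpartial, (csum_ext N (fun k => _ * (_ - _))%C
      (fun k => weight N n u k * f (r * zeta N ^ k) - weight N n u k * partial k M)%C)
      by (intros; ring).
    rewrite csum_minus. ring. }
  rewrite Hsplit. eapply Rle_trans; [apply Cmod_triangle|]. rewrite Rplus_comm.
  apply Rplus_le_compat.
  - apply Cmod_moment_series_defect_le; auto; lra.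
  - eapply Rle_trans; [apply Cmod_csum_le|].
    rewrite <- (Rmult_1_r eta), <- (weight_sum N n u) by lia.
    rewrite <- rsum_mult_l. apply rsum_le. intros k Hk.
    rewrite Cmod_mult, Cmod_R, Rabs_pos_eq by (apply weight_nonneg; auto; lia).
    rewrite (Rmult_comm eta). apply Rmult_le_compat_l; [apply weight_nonneg; auto; lia|].
    rewrite <- Cmod_opp, Copp_minus_distr. left. exact (Hclose k Hk).
Qed.

Lemma pseries_coef_geom_bound (a : nat -> C) (f : C -> C) r :
  (forall z, inD z -> is_pseries a z (f z)) -> 0 < r < 1 ->
  exists K q, 0 <= K /\ 0 <= q < 1 /\ forall m, Cmod (a m) * r ^ m <= K * q ^ m.
Proof.
  intros Hf Hr. set (r' := (1 + r) / 2).
  assert (Hr' : 0 < r < r') by (unfold r'; lra).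
  assert (Hin : inD (RtoC r')) by (unfold inD; rewrite Cmod_R, Rabs_pos_eq; unfold r'; lra).
  destruct (filterlim_bounded _ (ex_intro _ _ (Hf _ Hin))) as [B HB].
  set (F := fun m => (RtoC r' ^ m * a m)%C).
  assert (Hpartial : forall M, Cmod (csum M F) <= B).
  { intros [|M].
    - simpl. rewrite Cmod_0. eapply Rle_trans; [apply (norm_ge_0 (K := C_AbsRing) (V := C_NormedModule))|apply (HB 0%nat)].
    - rewrite <- sum_n_csum. exact (HB M). }
  assert (Hterm : forall m, Cmod (a m) * r' ^ m <= 2 * B).
  { intros m. replace (Cmod (a m) * r' ^ m) with (Cmod (csum (S m) F - csum m F)).
    - eapply Rle_trans; [apply Cmod_triangle|]. rewrite Cmod_opp.
      pose proof (Hpartial (S m)). pose proof (Hpartial m). lra.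
    - simpl. replace (csum m F + F m - csum m F)%C with (F m) by ring.
      unfold F. rewrite Cmod_mult, Cmod_pow, Cmod_R, Rabs_pos_eq by lra. ring. }
  exists (2 * B), (r / r'). split; [|split].
  - pose proof (Hterm 0%nat). pose proof (Cmod_ge_0 (a 0%nat)). simpl in *. lra.
  - split; [apply Rdiv_le_0_compat; lra|].
    apply Rmult_lt_reg_r with r'; [lra|]. unfold Rdiv. rewrite Rmult_assoc, Rinv_l; lra.
  - intros m. replace (r ^ m) with (r' ^ m * (r / r') ^ m)
      by (rewrite <- Rpow_mult_distr; f_equal; field; lra).
    rewrite <- Rmult_assoc. apply Rmult_le_compat_r; [|apply Hterm].
    apply pow_le, Rdiv_le_0_compat; lra.
Qed.

Lemma geom_tail_small K q eps : 0 <= K -> 0 <= q < 1 -> 0 < eps ->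
  exists N0, forall N, (N0 <= N)%nat -> K * (q ^ N / (1 - q)) < eps.
Proof.
  intros HK Hq Heps.
  assert (Hy : 0 < eps * (1 - q) / (K + 1)) by (apply Rdiv_lt_0_compat; nra).
  destruct (pow_lt_1_zero q ltac:(rewrite Rabs_pos_eq; lra) _ Hy) as [N0 HN0].
  exists N0. intros N HN. specialize (HN0 N HN).
  rewrite Rabs_pos_eq in HN0 by (apply pow_le; lra).
  apply (Rmult_lt_compat_l (K + 1)) in HN0; [|lra].
  replace ((K + 1) * (eps * (1 - q) / (K + 1))) with (eps * (1 - q)) in HN0 by (field; lra).
  pose proof (pow_le q N ltac:(lra)).
  apply Rle_lt_trans with ((K + 1) * q ^ N / (1 - q)).
  - unfold Rdiv. rewrite <- Rmult_assoc.
    apply Rmult_le_compat_r; [apply Rlt_le, Rinv_0_lt_compat|]; nra.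
  - apply Rmult_lt_reg_r with (1 - q); [lra|]. unfold Rdiv.
    rewrite Rmult_assoc, Rinv_l; lra.
Qed.

Lemma pseries_near_circle (Omega : C -> Prop) (a : nat -> C) (f : C -> C) n r v eps :
  convex_set Omega -> (forall z, inD z -> is_pseries a z (f z)) ->
  (forall z, inD z -> Omega (f z)) ->
  (0 < n)%nat -> 0 < r < 1 -> a n <> 0 -> Cmod v = 1 -> 0 < eps ->
  exists Q, Omega Q /\ Cmod (Q - (a 0%nat + RtoC (Cmod (a n) * r ^ n / 2) * v)) < eps.
Proof.
  intros Hconv Hf Hsub Hn Hr Han Hv Heps.
  destruct (pseries_coef_geom_bound a f r Hf Hr) as [K [q [HK [Hq Hb]]]].
  destruct (geom_tail_small K q eps HK Hq Heps) as [N0 HN0].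
  set (N := (N0 + 2 * n + 1)%nat).
  assert (Hman : 0 < Cmod (a n)) by (apply Cmod_gt_0; exact Han).
  set (u := Cconj (v * Cmod (a n) / a n)).
  assert (Hu : Cmod u = 1).
  { unfold u. rewrite Cmod_conj, Cmod_div by exact Han.
    rewrite Cmod_mult, Hv, Cmod_R, Rabs_pos_eq by lra.
    field. lra. }
  exists (csum N (fun k => weight N n u k * f (r * zeta N ^ k))%C). split.
  - apply convex_csum; [exact Hconv | intros; apply weight_nonneg; auto; lia
                       | apply weight_sum; lia |].
    intros k _. apply Hsub. unfold inD.
    rewrite Cmod_mult, Cmod_zeta_pow, Cmod_R, Rabs_pos_eq; lra.
  - replace (a 0%nat + RtoC (Cmod (a n) * r ^ n / 2) * v)%C
      with (a 0%nat + Cconj u / 2 * a n * r ^ n)%C.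
    + eapply Rle_lt_trans; [apply weighted_average_approx; eauto; lia|].
      apply HN0. unfold N. lia.
    + unfold u. rewrite Cconj_conj, RtoC_div, RtoC_mult, RtoC_pow by lra.
      field. exact Han.
Qed.

Lemma Cmod_lt_re_im (X : C) (x y eps : R) : Cmod (X - (x, y)) < eps ->
  Rabs (Re X - x) < eps /\ Rabs (Im X - y) < eps.
Proof.
  intros H. pose proof (Rmax_Cmod (X - (x, y))%C) as Hmax.
  split; (eapply Rle_lt_trans; [eapply Rle_trans; [|exact Hmax]|exact H]).
  - apply Rmax_l.
  - apply Rmax_r.
Qed.

Lemma Cmod_sub_rotated (Q c e : C) (rho x y : R) : Cmod e = 1 ->
  Cmod (Q - (c + rho * (e * (x, y)))) = Cmod ((Q - c) * Cconj e - ((rho * x)%R, (rho * y)%R)).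
Proof.
  intros He.
  replace ((Q - c) * Cconj e - ((rho * x)%R, (rho * y)%R))%C
    with ((Q - (c + rho * (e * (x, y)))) * Cconj e)%C.
  - rewrite Cmod_mult, Cmod_conj, He, Rmult_1_r. reflexivity.
  - transitivity ((Q - c) * Cconj e - rho * (x, y) * (Cconj e * e))%C; [ring|].
    rewrite conj_mult_unimodular by exact He.
    apply injective_projections; simpl; ring.
Qed.

Lemma convex_ray_point (Omega : C -> Prop) c e Q1 Q2 s :
  convex_set Omega -> Omega c -> Omega Q1 -> Omega Q2 -> Cmod e = 1 -> 0 <= s ->
  0 < Im ((Q1 - c) * Cconj e) -> Im ((Q2 - c) * Cconj e) < 0 ->
  s < Re ((Q1 - c) * Cconj e) -> s < Re ((Q2 - c) * Cconj e) ->
  Omega (c + s * e)%C.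
Proof.
  intros Hconv Hc HQ1 HQ2 He Hs.
  assert (Hrot : forall Q, (Q - c)%C = ((Q - c) * Cconj e * e)%C)
    by (intros; rewrite <- Cmult_assoc, conj_mult_unimodular by exact He; ring).
  pose proof (Hrot Q1) as HQ1c. pose proof (Hrot Q2) as HQ2c. revert HQ1c HQ2c.
  destruct ((Q1 - c) * Cconj e)%C as [x1 y1], ((Q2 - c) * Cconj e)%C as [x2 y2].
  unfold Re, Im. cbn [fst snd]. intros HQ1c HQ2c Hy1 Hy2 Hx1 Hx2.
  set (t := y1 / (y1 - y2)).
  assert (Ht : 0 <= t <= 1).
  { unfold t. split; [apply Rdiv_le_0_compat; lra|].
    apply Rmult_le_reg_r with (y1 - y2); [lra|].
    unfold Rdiv. rewrite Rmult_assoc, Rinv_l; lra. }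
  set (R0 := (1 - t) * x1 + t * x2).
  assert (HR0 : s < R0).
  { unfold R0.
    assert (0 <= (1 - t) * (x1 - x2) \/ 0 <= t * (x2 - x1)) as [H|H]
      by (destruct (Rle_dec x2 x1); [left | right]; apply Rmult_le_pos; lra); nra. }
  set (Y := (RtoC (1 - t) * Q1 + t * Q2)%C).
  assert (HYc : (Y - c)%C = (R0 * e)%C).
  { transitivity (RtoC (1 - t) * (Q1 - c) + t * (Q2 - c))%C;
      [unfold Y; rewrite RtoC_minus; ring|].
    rewrite HQ1c, HQ2c.
    replace (RtoC R0) with (RtoC (1 - t) * (x1, y1) + t * (x2, y2))%C; [ring|].
    apply injective_projections; simpl; unfold R0; [ring|].
    unfold t. field. lra. }
  set (tau := s / R0).
  assert (Htau : 0 <= tau <= 1).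
  { unfold tau. split; [apply Rdiv_le_0_compat; lra|].
    apply Rmult_le_reg_r with R0; [lra|].
    unfold Rdiv. rewrite Rmult_assoc, Rinv_l; lra. }
  replace (c + s * e)%C with (RtoC (1 - tau) * c + tau * Y)%C.
  - apply Hconv; [exact Hc | apply Hconv; auto | exact Htau].
  - transitivity (c + tau * (Y - c))%C; [rewrite RtoC_minus; ring|].
    rewrite HYc, Cmult_assoc, <- RtoC_mult. unfold tau.
    do 3 f_equal. field. lra.
Qed.

Lemma unit_direction (w : C) : w <> 0 -> exists e, Cmod e = 1 /\ w = (Cmod w * e)%C.
Proof.
  intros Hw. assert (Hm : 0 < Cmod w) by (apply Cmod_gt_0; exact Hw).
  assert (HmC : RtoC (Cmod w) <> 0) by (intro E; injection E; lra).
  exists (w / Cmod w)%C. split.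
  - rewrite Cmod_div, Cmod_R, Rabs_pos_eq by (exact HmC || lra). field. lra.
  - field. exact HmC.
Qed.

Lemma unit_circle_point_beyond t : 0 <= t < 1 ->
  exists x y, t < x /\ 0 < y /\ x ^ 2 + y ^ 2 = 1.
Proof.
  intros Ht. exists ((1 + t) / 2), (sqrt (1 - ((1 + t) / 2) ^ 2)).
  assert (H : 0 < 1 - ((1 + t) / 2) ^ 2) by nra.
  split; [lra | split; [apply sqrt_lt_R0, H|]].
  rewrite <- (Rsqr_pow2 (sqrt _)), Rsqr_sqrt by lra. ring.
Qed.

Lemma convex_disk_of_near_circle (Omega : C -> Prop) c (rho : R) :
  convex_set Omega -> Omega c ->
  (forall v eps, Cmod v = 1 -> 0 < eps ->
     exists Q, Omega Q /\ Cmod (Q - (c + rho * v)) < eps) ->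
  forall z, Cmod (z - c) < rho -> Omega z.
Proof.
  intros Hconv Hc Hnear z Hz.
  destruct (Ceq_dec z c) as [->|Hzc]; [exact Hc|].
  assert (Hzc0 : (z - c)%C <> 0) by (intro E; apply Hzc, Ceq_minus, E).
  destruct (unit_direction _ Hzc0) as [e [He Hze]].
  set (s := Cmod (z - c)) in *.
  assert (Hs : 0 < s) by (apply Cmod_gt_0, Hzc0).
  destruct (unit_circle_point_beyond (s / rho)) as [x [y [Hx [Hy Hxy]]]].
  { split; [apply Rdiv_le_0_compat; lra|].
    apply Rmult_lt_reg_r with rho; [lra|]. unfold Rdiv. rewrite Rmult_assoc, Rinv_l; lra. }
  assert (Hrx : s < rho * x).
  { replace s with (rho * (s / rho)) by (field; lra). apply Rmult_lt_compat_l; lra. }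
  (* Points of Omega close to c + rho e (x +- i y) lie beyond z in the direction e,
     on either side of the ray from c through z. *)
  set (eps := Rmin (rho * x - s) (rho * y) / 2).
  assert (Heps : 0 < eps /\ eps < rho * x - s /\ eps < rho * y).
  { unfold eps. pose proof (Rmin_l (rho * x - s) (rho * y)).
    pose proof (Rmin_r (rho * x - s) (rho * y)).
    assert (0 < Rmin (rho * x - s) (rho * y)) by (apply Rmin_case; nra). lra. }
  assert (Hunit : forall y', y' ^ 2 = y ^ 2 -> Cmod (e * (x, y')) = 1).
  { intros y' Hy'. rewrite Cmod_mult, He, Rmult_1_l. unfold Cmod. cbn [fst snd].
    rewrite Hy', Hxy. apply sqrt_1. }
  destruct (Hnear (e * (x, y))%C eps (Hunit y eq_refl) (proj1 Heps))
    as [Q1 [HQ1 Hnear1]].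
  destruct (Hnear (e * (x, (- y)%R))%C eps (Hunit (- y) ltac:(ring)) (proj1 Heps))
    as [Q2 [HQ2 Hnear2]].
  rewrite Cmod_sub_rotated in Hnear1, Hnear2 by exact He.
  apply Cmod_lt_re_im in Hnear1 as [Hre1 Him1], Hnear2 as [Hre2 Him2].
  apply Rabs_lt_between' in Hre1, Him1, Hre2, Him2.
  replace z with (c + s * e)%C by (rewrite <- Hze; ring).
  apply (convex_ray_point Omega c e Q1 Q2 s); auto; nra.
Qed.

Lemma is_pseries_at_0 (a : nat -> C) l : is_pseries a (RtoC 0) l -> l = a 0%nat.
Proof.
  intros H. exact (filterlim_locally_unique _ _ _ H
    (is_pseries_0 (K := C_AbsRing) (V := C_NormedModule) a)).
Qed.

Lemma pseries_disk_in_convex (Omega : C -> Prop) (a : nat -> C) (f : C -> C) n r :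
  convex_set Omega -> (forall z, inD z -> is_pseries a z (f z)) ->
  (forall z, inD z -> Omega (f z)) -> (0 < n)%nat -> 0 < r < 1 ->
  forall z, Cmod (z - a 0%nat) < Cmod (a n) * r ^ n / 2 -> Omega z.
Proof.
  intros Hconv Hf Hsub Hn Hr.
  destruct (Ceq_dec (a n) 0) as [E|Han].
  { intros z Hz. rewrite E, Cmod_0 in Hz. pose proof (Cmod_ge_0 (z - a 0%nat)). lra. }
  apply convex_disk_of_near_circle; [exact Hconv| |].
  - assert (H0 : inD (RtoC 0)) by (unfold inD; rewrite Cmod_0; lra).
    rewrite <- (is_pseries_at_0 a (f (RtoC 0)) (Hf _ H0)). exact (Hsub _ H0).
  - intros v eps Hv Heps. apply pseries_near_circle with (f := f); auto.
Qed.

Lemma disk_radius_le_dist_boundary (Omega : C -> Prop) c s lam :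
  dist_boundary c Omega = Finite lam ->
  (forall z, Cmod (z - c) < s -> Omega z) -> s <= lam.
Proof.
  intros Hd Hdisk. unfold dist_boundary in Hd.
  destruct (Glb_Rbar_correct (fun d => exists w, boundary Omega w /\ d = Cmod (w - c)))
    as [_ Hglb].
  rewrite Hd in Hglb. apply (Hglb (Finite s)).
  intros x [w [[_ Hout] ->]]. simpl.
  destruct (Rle_lt_dec s (Cmod (w - c))) as [Hle|Hlt]; [exact Hle|].
  destruct (Hout (s - Cmod (w - c)) ltac:(lra)) as [v [Hv Hvw]].
  exfalso. apply Hv, Hdisk.
  replace (v - c)%C with ((v - w) + (w - c))%C by ring.
  eapply Rle_lt_trans; [apply Cmod_triangle | lra].
Qed.

Lemma bernoulli_ineq d n : 0 <= d <= 1 -> 1 - INR n * d <= (1 - d) ^ n.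
Proof.
  intros Hd. induction n as [|n IH]; [simpl; lra|].
  rewrite S_INR. simpl. pose proof (pos_INR n). nra.
Qed.

Lemma le_of_forall_mul_pow_le A B n : 0 <= A ->
  (forall r, 0 < r < 1 -> A * r ^ n <= B) -> A <= B.
Proof.
  intros HA H. destruct (Rle_lt_dec A B) as [|HBA]; [assumption|exfalso].
  assert (HB : 0 <= B) by (specialize (H (1 / 2) ltac:(lra));
                          pose proof (pow_le (1 / 2) n ltac:(lra)); nra).
  pose proof (pos_INR n) as Hn.
  set (d := (A - B) / (2 * (INR n + 1) * A)).
  assert (Hnd : (INR n + 1) * d = (A - B) / (2 * A)) by (unfold d; field; lra).
  assert (Hd : 0 < d <= 1 / 2).
  { unfold d. split; [apply Rdiv_lt_0_compat; nra|].
    apply Rmult_le_reg_r with (2 * (INR n + 1) * A); [nra|].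
    unfold Rdiv. rewrite Rmult_assoc, Rinv_l; nra. }
  specialize (H (1 - d) ltac:(lra)).
  pose proof (bernoulli_ineq d n ltac:(lra)).
  assert (A * (1 - INR n * d) <= A * (1 - d) ^ n) by (apply Rmult_le_compat_l; lra).
  assert (A * (1 - (INR n + 1) * d) = (A + B) / 2) by (rewrite Hnd; field; lra).
  nra.
Qed.

Lemma pseries_coef_le_twice_dist (Omega : C -> Prop) (a : nat -> C) (f : C -> C) lam :
  convex_set Omega -> (forall z, inD z -> is_pseries a z (f z)) ->
  (forall z, inD z -> Omega (f z)) -> dist_boundary (a 0%nat) Omega = Finite lam ->
  0 <= lam /\ forall n, (0 < n)%nat -> Cmod (a n) <= 2 * lam.
Proof.
  intros Hconv Hf Hsub Hd. split.
  - apply (disk_radius_le_dist_boundary Omega (a 0%nat)); [exact Hd|].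
    intros z Hz. pose proof (Cmod_ge_0 (z - a 0%nat)). lra.
  - intros n Hn. apply le_of_forall_mul_pow_le with n; [apply Cmod_ge_0|].
    intros r Hr.
    assert (Cmod (a n) * r ^ n / 2 <= lam); [|lra].
    apply (disk_radius_le_dist_boundary Omega (a 0%nat)); [exact Hd|].
    apply pseries_disk_in_convex with f; auto.
Qed.

Lemma subordinate_pseries (f g : C -> C) (a : nat -> C) :
  (forall z, inD z -> is_pseries a z (f z)) -> subordinate f g ->
  a 0%nat = g (RtoC 0) /\ forall z, inD z -> image_D g (f z).
Proof.
  intros Hf [omega [_ [Homega [Homega0 Hfg]]]].
  assert (H0 : inD (RtoC 0)) by (unfold inD; rewrite Cmod_0; lra).
  split.
  - rewrite <- (is_pseries_at_0 a (f (RtoC 0)) (Hf _ H0)), Hfg, Homega0 by exact H0.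
    reflexivity.
  - intros z Hz. exists (omega z). split; [apply Homega, Hz | symmetry; apply Hfg, Hz].
Qed.

Lemma Series_le_geom (u : nat -> R) c q : 0 <= q < 1 ->
  (forall n, 0 <= u n <= c * q ^ n) -> Series u <= c / (1 - q).
Proof.
  intros Hq Hu.
  assert (Hgeom : is_series (fun n => c * q ^ n) (c / (1 - q))).
  { assert (Hq1 : Rabs q < 1) by (rewrite Rabs_pos_eq; lra).
    exact (is_series_scal_l (K := R_AbsRing) c _ _ (is_series_geom q Hq1)). }
  rewrite <- (is_series_unique _ _ Hgeom).
  apply Series_le; [exact Hu | eexists; exact Hgeom].
Qed.

Definition gap_poly (r lam : R) : R :=
  4 * r ^ 3 * lam ^ 2 - (7 * r ^ 3 + 3 * r ^ 2 - 3 * r + 1) * lam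
  + 6 * r ^ 3 - 2 * r ^ 2 - 6 * r + 2.

Lemma T_f_le_of_coef_bound (a : nat -> C) lam r :
  0 <= lam < 2 -> (forall n, (0 < n)%nat -> Cmod (a n) <= 2 * lam) -> 0 <= r < 1 ->
  0 <= gap_poly r lam -> T_f a lam r <= lam.
Proof.
  intros Hl Ha Hr Hgap. unfold T_f.
  assert (Hr2 : 0 <= r ^ 2 < 1) by (split; [apply pow_le|]; nra).
  assert (S1 : Series (fun n => Cmod (a (S n)) * r ^ S n) <= 2 * lam * r / (1 - r)).
  { apply Series_le_geom; [lra|]. intros n.
    pose proof (Ha (S n) ltac:(lia)). pose proof (Cmod_ge_0 (a (S n))).
    assert (0 <= r * r ^ n) by (apply Rmult_le_pos; [|apply pow_le]; lra).
    simpl. split; [apply Rmult_le_pos; lra|].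
    rewrite (Rmult_assoc (2 * lam)). apply Rmult_le_compat_r; lra. }
  assert (S2 : Series (fun n => Cmod (a (S n)) ^ 2 * r ^ (2 * S n))
               <= 4 * lam ^ 2 * r ^ 2 / (1 - r ^ 2)).
  { apply Series_le_geom; [lra|]. intros n.
    pose proof (Ha (S n) ltac:(lia)). pose proof (Cmod_ge_0 (a (S n))).
    rewrite pow_mult. change ((r ^ 2) ^ S n) with (r ^ 2 * (r ^ 2) ^ n).
    assert (0 <= r ^ 2 * (r ^ 2) ^ n) by (apply Rmult_le_pos, pow_le; lra).
    assert (Cmod (a (S n)) ^ 2 <= (2 * lam) ^ 2) by (apply pow_incr; lra).
    split; [apply Rmult_le_pos; [apply pow_le|]; lra|].
    replace (4 * lam ^ 2 * r ^ 2 * (r ^ 2) ^ n)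
      with ((2 * lam) ^ 2 * (r ^ 2 * (r ^ 2) ^ n)) by ring.
    apply Rmult_le_compat_r; lra. }
  assert (Hfactor : 0 <= 1 / (2 - lam) + r / (1 - r))
    by (apply Rplus_le_le_0_compat; apply Rdiv_le_0_compat; lra).
  assert (Hgap_id : lam - (2 * lam * r / (1 - r)
      + (1 / (2 - lam) + r / (1 - r)) * (4 * lam ^ 2 * r ^ 2 / (1 - r ^ 2)))
      = lam * gap_poly r lam / ((2 - lam) * (1 - r) * (1 - r ^ 2)))
    by (unfold gap_poly; field; repeat split; nra).
  assert (0 <= lam * gap_poly r lam / ((2 - lam) * (1 - r) * (1 - r ^ 2))).
  { apply Rdiv_le_0_compat; [apply Rmult_le_pos; lra|].
    apply Rmult_lt_0_compat; [apply Rmult_lt_0_compat|]; lra. }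
  pose proof (Rmult_le_compat_l _ _ _ Hfactor S2). lra.
Qed.

Lemma gap_poly_decreasing x y lam : 0 <= x -> x < y -> y <= 1 / 3 -> 0 <= lam <= 1 ->
  gap_poly y lam < gap_poly x lam.
Proof.
  intros Hx Hxy Hy Hl.
  set (S := x ^ 2 + x * y + y ^ 2). set (T := x + y).
  assert (E : gap_poly x lam - gap_poly y lam
    = (y - x) * (- 4 * lam ^ 2 * S + lam * (7 * S + 3 * T - 3) - 6 * S + 2 * T + 6))
    by (unfold gap_poly, S, T; ring).
  assert (0 <= S <= 1 / 3) by (unfold S; split; nra).
  assert (lam ^ 2 * S <= lam * S) by (assert (lam ^ 2 <= lam) by nra; nra).
  assert (0 <= lam * T) by (unfold T; nra).
  assert (0 <= lam * S) by nra.
  assert (0 < (1 - S) * (2 - lam)) by (apply Rmult_lt_0_compat; lra).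
  assert (HB : 0 < - 4 * lam ^ 2 * S + lam * (7 * S + 3 * T - 3) - 6 * S + 2 * T + 6)
    by (unfold T in *; nra).
  pose proof (Rmult_lt_0_compat (y - x) _ ltac:(lra) HB). lra.
Qed.

Lemma rstar_lt_quarter rs : 0 < rs < 1 -> 3 * rs ^ 3 - 5 * rs ^ 2 - 3 * rs + 1 = 0 ->
  rs < 1 / 4.
Proof.
  intros Hr E. destruct (Rlt_le_dec rs (1 / 4)) as [|H]; [assumption|exfalso].
  assert (E2 : 3 * rs ^ 3 - 5 * rs ^ 2 - 3 * rs + 1
               = - 1 / 64 + (rs - 1 / 4) * (3 * rs ^ 2 - 17 / 4 * rs - 65 / 16)) by field.
  assert (3 * rs ^ 2 - 17 / 4 * rs - 65 / 16 < 0) by nra.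
  nra.
Qed.

Lemma gap_poly_rstar rs lam : 0 < rs < 1 -> 3 * rs ^ 3 - 5 * rs ^ 2 - 3 * rs + 1 = 0 ->
  0 <= lam <= 1 -> exists h, 0 < h /\ gap_poly rs lam = (1 - lam) * h.
Proof.
  intros Hr E Hl. pose proof (rstar_lt_quarter rs Hr E).
  exists (2 * (1 - rs ^ 2) * (1 - 3 * rs) - 4 * rs ^ 3 * lam). split.
  - assert (rs ^ 3 <= 1 / 64) by nra.
    assert (rs ^ 3 * lam <= 1 / 64) by (pose proof (pow_le rs 3 ltac:(lra)); nra).
    nra.
  - transitivity ((1 - lam) * (2 * (1 - rs ^ 2) * (1 - 3 * rs) - 4 * rs ^ 3 * lam)
                  + lam * (3 * rs ^ 3 - 5 * rs ^ 2 - 3 * rs + 1));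
      [unfold gap_poly; ring | rewrite E; ring].
Qed.

Lemma gap_poly_third_neg lam : 0 < lam < 1 -> gap_poly (1 / 3) lam < 0.
Proof.
  intros Hl. replace (gap_poly (1 / 3) lam) with (4 * lam / 27 * (lam - 4))
    by (unfold gap_poly; field). nra.
Qed.

Lemma gap_poly_unique_root rs lam :
  rs < 1 / 3 -> 0 <= rs -> 0 < gap_poly rs lam -> 0 < lam < 1 ->
  exists r0, (rs < r0 < 1 / 3 /\ gap_poly r0 lam = 0) /\
    forall r1, rs < r1 < 1 / 3 -> gap_poly r1 lam = 0 -> r1 = r0.
Proof.
  intros Hrs Hrs0 Hpos Hl.
  assert (Hcont : continuity (fun r => - gap_poly r lam))
    by (unfold gap_poly; apply derivable_continuous; reg).
  pose proof (gap_poly_third_neg lam Hl) as Hthird.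
  destruct (IVT (fun r => - gap_poly r lam) rs (1 / 3) Hcont ltac:(lra) ltac:(lra)
              ltac:(lra)) as [r0 [[Hr0l Hr0u] E0]].
  assert (E0' : gap_poly r0 lam = 0) by lra.
  assert (Hr0 : rs < r0 < 1 / 3)
    by (split; [destruct Hr0l as [ | <- ] | destruct Hr0u as [ | -> ]]; lra).
  exists r0. split; [split; assumption|].
  intros r1 Hr1 E1.
  destruct (Rtotal_order r1 r0) as [Hlt|[Heq|Hgt]]; [exfalso | exact Heq | exfalso].
  - pose proof (gap_poly_decreasing r1 r0 lam ltac:(lra) Hlt ltac:(lra) ltac:(lra)). lra.
  - pose proof (gap_poly_decreasing r0 r1 lam ltac:(lra) Hgt ltac:(lra) ltac:(lra)). lra.
Qed.

Lemma T_f_le_below (a : nat -> C) lam r1 :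
  0 <= lam <= 1 -> (forall n, (0 < n)%nat -> Cmod (a n) <= 2 * lam) ->
  r1 <= 1 / 3 -> 0 <= gap_poly r1 lam ->
  forall r, 0 <= r <= r1 -> T_f a lam r <= lam.
Proof.
  intros Hl Ha Hr1 Hgap r Hr. apply T_f_le_of_coef_bound; auto; try lra.
  destruct (Req_dec r r1) as [->|]; [exact Hgap|].
  pose proof (gap_poly_decreasing r r1 lam ltac:(lra) ltac:(lra) Hr1 Hl). lra.
Qed.

Theorem theorem2 (g f : C -> C) (a : nat -> C) (lam rs : R) :
  analytic_D g -> univalent_D g -> convex_image_D g ->
  (forall z : C, inD z -> is_pseries a z (f z)) ->
  subordinate f g ->
  dist_boundary (g (RtoC 0)) (image_D g) = Finite lam ->
  lam <= 1 ->
  0 < rs < 1 -> 3 * rs ^ 3 - 5 * rs ^ 2 - 3 * rs + 1 = 0 ->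
  (forall r : R, 0 <= r <= rs -> T_f a lam r <= lam) /\
  (0 < lam < 1 ->
   exists r0 : R,
     (rs < r0 < 1 / 3 /\
      4 * r0 ^ 3 * lam ^ 2 - (7 * r0 ^ 3 + 3 * r0 ^ 2 - 3 * r0 + 1) * lam
        + 6 * r0 ^ 3 - 2 * r0 ^ 2 - 6 * r0 + 2 = 0) /\
     (forall r1 : R, rs < r1 < 1 / 3 ->
        4 * r1 ^ 3 * lam ^ 2 - (7 * r1 ^ 3 + 3 * r1 ^ 2 - 3 * r1 + 1) * lam
          + 6 * r1 ^ 3 - 2 * r1 ^ 2 - 6 * r1 + 2 = 0 -> r1 = r0) /\
     (forall r : R, 0 <= r <= r0 -> T_f a lam r <= lam)).
Proof.
  intros _ _ Hconv Hf Hsub Hd Hl1 Hrs Hcubic.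
  destruct (subordinate_pseries f g a Hf Hsub) as [Ha0 Himage].
  rewrite <- Ha0 in Hd.
  destruct (pseries_coef_le_twice_dist (image_D g) a f lam Hconv Hf Himage Hd)
    as [Hl0 Hcoef].
  pose proof (rstar_lt_quarter rs Hrs Hcubic) as Hrs4.
  destruct (gap_poly_rstar rs lam Hrs Hcubic ltac:(lra)) as [h [Hh Hgap_rs]].
  split.
  - apply T_f_le_below; [lra | exact Hcoef | lra | rewrite Hgap_rs; nra].
  - intros Hl.
    destruct (gap_poly_unique_root rs lam ltac:(lra) ltac:(lra)
                ltac:(rewrite Hgap_rs; nra) Hl) as [r0 [[Hr0 E0] Huniq]].
    exists r0. split; [split; assumption|]. split; [exact Huniq|].
    apply T_f_le_below; [lra | exact Hcoef | lra | rewrite E0; lra].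
Qed.
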